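(* Let $C$ be a bounded closed convex subset of a Hilbert space $H$ and let $T : C \rightarrow C$ be a $(b,k)$-enriched strictly pseudocontractive mapping for some $0 \leq k < 1$. Then $\mathrm{Fix}(T) \neq \emptyset$ and, for any given $x_0 \in C$ and any control sequence $\{\alpha_n\}$ of real numbers such that $k < \alpha_n < 1$ for all $n$ and $$\sum_{n=0}^{\infty} (\alpha_n - k)(1 - \alpha_n) = \infty,$$ the Krasnoselskij-Mann iteration $\{x_n\}_{n=0}^\infty$ given by $$x_{n+1} = (1 - \lambda\alpha_n)x_n + \lambda\alpha_n T x_n, \quad n \geq 0,$$ for some $\lambda \in (0,1)$, converges weakly to a fixed point of $T$.
   Context: For a mapping $T : C \to C$, $C \subseteq H$, $\mathrm{Fix}(T) = \{x \in C : Tx = x\}$. A mapping $T : C \to C$ is called $(b,k)$-enriched strictly pseudocontractive if there exist $b \in [0,\infty)$ and $k < 1$ such that for all $x, y \in C$, $$\|b(x - y) + Tx - Ty\|^2 \leq (b + 1)^2\|x - y\|^2 + k\|x - y - (Tx - Ty)\|^2.$$ *)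

From HB Require Import structures.
From mathcomp Require Import all_boot all_order all_algebra.
From mathcomp Require Import all_classical all_reals all_analysis.
Set Implicit Arguments. Unset Strict Implicit. Unset Printing Implicit Defensive.
Import Order.TTheory GRing.Theory Num.Theory.
Import numFieldNormedType.Exports.
Local Open Scope classical_set_scope.
Local Open Scope ring_scope.

(* A (real) inner product on a normed module V whose norm it induces.
   A real Hilbert space is then a complete normed module
   (completeNormedModType R) equipped with such an inner product. *)
Record inner_product (R : realType) (V : normedModType R) := InnerProduct {
  ip :> V -> V -> R;
  ip_sym : forall x y, ip x y = ip y x;
  ip_linear : forall (a : R) x y z, ip (a *: x + y) z = a * ip x z + ip y z;
  ip_norm : forall x, ip x x = `|x| ^+ 2
}.

Definition Fix (R : realType) (V : normedModType R) (C : set V) (T : V -> V) : set V :=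
  [set x | C x /\ T x = x].

Definition enriched_spc (R : realType) (V : normedModType R) (C : set V)
    (T : V -> V) (b k : R) : Prop :=
  0 <= b /\ k < 1 /\
  forall x y, C x -> C y ->
    `|b *: (x - y) + (T x - T y)| ^+ 2
      <= (b + 1) ^+ 2 * `|x - y| ^+ 2 + k * `|x - y - (T x - T y)| ^+ 2.

Fixpoint km_iter (R : realType) (V : normedModType R) (T : V -> V) (lam : R)
    (alpha : nat -> R) (x0 : V) (n : nat) : V :=
  match n with
  | 0 => x0
  | n'.+1 => let xn := km_iter T lam alpha x0 n' in
      (1 - lam * alpha n') *: xn + (lam * alpha n') *: T xn
  end.

Definition weak_cvg (R : realType) (V : normedModType R) (I : inner_product V)
    (u : nat -> V) (p : V) : Prop :=
  forall y : V, (fun n => I (u n) y) @ \oo --> I p y.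

(* Weak compactness is replaced by asymptotic centers. For a bounded sequence x
   and an infinite set of indices P, the function
   r_P(z) = limsup_(n in P) |x_n - z|^2 is uniformly convex by the parallelogram
   law, so it has a unique minimizer, the asymptotic center along P; it lies in
   every closed convex set containing the x_n, since the metric projection
   decreases r_P.

   With w = (1 - k) / (b + 1), the averaged map N = (1 - w) id + w T is
   nonexpansive on C and has the fixed points of T, and the Krasnoselskij-Mann
   iteration of T with lam = w / 2 is the Mann iteration of N with weights
   alpha_n / 2. N maps the asymptotic center of any of its orbits to a center of
   the same orbit, hence fixes it. The Mann iterates are Fejer monotone with
   respect to the fixed points of N and their residuals |x_n - N x_n| tend to 0
   because sum s_n (1 - s_n) diverges. Hence every center along an infinite P
   is a fixed point, on which r_P coincides with the full limsup r, so the
   center c of the whole sequence is the center along every infinite P. If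
   <x_n - c, y> >= e along an infinite P, moving c slightly towards y would
   lower r_P; applied to y and -y this gives <x_n, y> --> <c, y>. *)

From HB Require Import structures.
From mathcomp Require Import all_boot all_order all_algebra.
From mathcomp Require Import all_classical all_reals all_analysis.
From mathcomp Require Import ring lra.
Import Order.TTheory GRing.Theory Num.Theory.
Import numFieldNormedType.Exports.
Local Open Scope classical_set_scope.
Local Open Scope ring_scope.

Section ConvexCombination.
Context {R : numDomainType} {V : lmodType R}.

Lemma convex_combBB (t : R) (a b a' b' : V) :
  ((1 - t) *: a + t *: b) - ((1 - t) *: a' + t *: b') = (1 - t) *: (a - a') + t *: (b - b').
Proof. by rewrite opprD addrACA -!scalerBr. Qed.

Lemma convex_combB (t : R) (a b c : V) :
  (1 - t) *: a + t *: b - c = (1 - t) *: (a - c) + t *: (b - c).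
Proof. by rewrite -convex_combBB -scalerDl subrK scale1r. Qed.

Lemma convex_set_combination {C : set V} {a b : V} {t : R} :
  convex_set C -> C a -> C b -> 0 <= t -> t <= 1 -> C ((1 - t) *: a + t *: b).
Proof.
move=> C_convex Ca Cb t0 t1.
have t0' : 0 <= 1 - t by rewrite subr_ge0.
have t1' : 1 - t <= 1 by rewrite gerBl.
have := C_convex a b (Itv01 t0' t1'); rewrite !inE => /(_ Ca Cb).
by congr C; rewrite /conv /= /unstable.onem subKr.
Qed.

End ConvexCombination.

Lemma convex_set_midpoint {R : realFieldType} {V : lmodType R} {C : set V} :
  convex_set C -> forall a b, C a -> C b -> C (2^-1 *: (a + b)).
Proof.
move=> C_convex a b Ca Cb; have half0 : 0 <= (2^-1 : R) by lra.
have half1 : (2^-1 : R) <= 1 by lra.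
have := convex_set_combination C_convex Ca Cb half0 half1.
by rewrite (_ : 1 - 2^-1 = 2^-1 :> R) -?scalerDr //; field.
Qed.

Section InnerProduct.
Context {R : realType} {V : normedModType R} (I : inner_product V).

Lemma ipDl x y z : I (x + y) z = I x z + I y z.
Proof. by have := ip_linear I 1 x y z; rewrite scale1r mul1r. Qed.

Lemma ip0l z : I 0 z = 0.
Proof. by have := ipDl 0 0 z; rewrite addr0; lra. Qed.

Lemma ipZl a x z : I (a *: x) z = a * I x z.
Proof. by have := ip_linear I a x 0 z; rewrite addr0 ip0l addr0. Qed.

Lemma ipZr a x z : I z (a *: x) = a * I z x.
Proof. by rewrite ip_sym ipZl ip_sym. Qed.

Lemma ipNr x z : I z (- x) = - I z x.
Proof. by rewrite -scaleN1r ipZr mulN1r. Qed.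

Lemma ipDr x y z : I z (x + y) = I z x + I z y.
Proof. by rewrite ip_sym ipDl !(ip_sym I z). Qed.

Lemma ipBl x y z : I (x - y) z = I x z - I y z.
Proof. by rewrite ip_sym ipDr ipNr !(ip_sym I z). Qed.

Lemma sqr_normD x y : `|x + y| ^+ 2 = `|x| ^+ 2 + 2 * I x y + `|y| ^+ 2.
Proof. by rewrite -!(ip_norm I) ipDl !ipDr (ip_sym I y x); ring. Qed.

Lemma sqr_normB x y : `|x - y| ^+ 2 = `|x| ^+ 2 - 2 * I x y + `|y| ^+ 2.
Proof. by rewrite sqr_normD normrN ipNr; ring. Qed.

Lemma sqr_norm_convex (t : R) (u v : V) :
  `|(1 - t) *: u + t *: v| ^+ 2 =
  (1 - t) * `|u| ^+ 2 + t * `|v| ^+ 2 - t * (1 - t) * `|u - v| ^+ 2.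
Proof.
rewrite sqr_normD sqr_normB !normrZ !exprMn !real_normK ?num_real //.
by rewrite ipZl ipZr; ring.
Qed.

Lemma sqr_norm_sub_midpoint (u a b : V) :
  `|u - 2^-1 *: (a + b)| ^+ 2 =
  2^-1 * `|u - a| ^+ 2 + 2^-1 * `|u - b| ^+ 2 - 4^-1 * `|a - b| ^+ 2.
Proof.
have half : 1 - 2^-1 = 2^-1 :> R by field.
have -> : u - 2^-1 *: (a + b) = (1 - 2^-1) *: (u - a) + 2^-1 *: (u - b).
  rewrite half -scalerDr addrACA -opprD scalerBr; congr (_ - _).
  by rewrite -[u + u]mulr2n -[u *+ 2]scaler_nat scalerA mulVf ?scale1r // pnatr_eq0.
rewrite sqr_norm_convex (_ : u - a - (u - b) = - (a - b)) ?normrN ?half; first by field.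
by rewrite opprB addrC addrA subrK opprB.
Qed.

End InnerProduct.

Definition frequently (P : nat -> Prop) := ~ \forall n \near \oo, ~ P n.

Lemma frequently_near {P Q : nat -> Prop} :
  frequently P -> (\forall n \near \oo, Q n) -> exists n, P n /\ Q n.
Proof.
move=> fP evQ; apply: contrapT => nPQ; apply: fP.
by apply: filterS evQ => n Qn Pn; apply: nPQ; exists n.
Qed.

Lemma frequentlyT : frequently (fun _ => True).
Proof. by move=> /filter_ex [n]. Qed.

Definition bounded_seq {R : realType} (u : nat -> R) := exists M, forall n, `|u n| <= M.

Definition limsup_on {R : realType} (P : nat -> Prop) (u : nat -> R) : R :=
  inf [set sup [set u n | n in [set n | (N <= n)%N /\ P n]] | N in [set: nat]].

Section LimsupOn.
Context {R : realType} {P : nat -> Prop} (freqP : frequently P).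

Section Bounded.
Context {u : nat -> R} (bu : bounded_seq u).

Let tail N := [set u n | n in [set n | (N <= n)%N /\ P n]].

Let tail_nonempty N : exists2 n, (N <= n)%N & P n.
Proof.
have evN : \forall n \near \oo, (N <= n)%N by exists N.
by have [n [Pn Nn]] := frequently_near freqP evN; exists n.
Qed.

Let has_sup_tail N : has_sup (tail N).
Proof.
have [M uM] := bu; have [n Nn Pn] := tail_nonempty N.
split; first by exists (u n), n.
by exists M => _ [m _ <-]; apply: le_trans (ler_norm _) (uM m).
Qed.

Let has_inf_sups : has_inf [set sup (tail N) | N in [set: nat]].
Proof.
have [M uM] := bu; split; first by exists (sup (tail 0)), 0%N.
exists (- M) => _ [N _ <-]; have [n Nn Pn] := tail_nonempty N.
apply: le_trans (sup_upper_bound (has_sup_tail N) _); last by exists n.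
by rewrite lerNl; apply: le_trans (uM n); rewrite -normrN ler_norm.
Qed.

Lemma limsup_on_ev_le e : 0 < e -> \forall n \near \oo, P n -> u n <= limsup_on P u + e.
Proof.
move=> e0; have [_ [N _ <-] supN] := inf_adherent e0 has_inf_sups.
exists N => // n Nn Pn; apply: le_trans (ltW supN).
by apply: sup_upper_bound => //; exists n.
Qed.

Lemma limsup_on_freq_ge e : 0 < e -> frequently (fun n => P n /\ limsup_on P u - e <= u n).
Proof.
move=> e0 [N _ hN].
have [_ [n [Nn Pn] <-] supN] := sup_adherent e0 (has_sup_tail N).
apply: (hN n Nn); split => //; apply: le_trans (ltW supN); rewrite lerD2r.
by apply: ge_inf; [case: has_inf_sups | exists N].
Qed.

Lemma limsup_on_le r : (forall e, 0 < e -> \forall n \near \oo, P n -> u n <= r + e) ->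
  limsup_on P u <= r.
Proof.
move=> ev_le; apply/ler_addgt0Pr => e e0.
have e2 : 0 < e / 2 by rewrite divr_gt0.
have [n [[Pn ge_n] le_n]] := frequently_near (limsup_on_freq_ge _ e2) (ev_le _ e2).
by have := le_n Pn; lra.
Qed.

Lemma limsup_on_ge r : (forall e, 0 < e -> \forall n \near \oo, P n -> r - e <= u n) ->
  r <= limsup_on P u.
Proof.
move=> ev_ge; apply/ler_addgt0Pr => e e0.
have e2 : 0 < e / 2 by rewrite divr_gt0.
have [n [Pn [ge_n le_n]]] :=
  frequently_near freqP (filterI (ev_ge _ e2) (limsup_on_ev_le _ e2)).
by have := ge_n Pn; have := le_n Pn; lra.
Qed.

End Bounded.

Lemma le_limsup_on {u v : nat -> R} {c : R} : bounded_seq u -> bounded_seq v ->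
  (\forall n \near \oo, P n -> u n <= v n + c) -> limsup_on P u <= limsup_on P v + c.
Proof.
move=> bu bv le_uv; apply: limsup_on_le => // e e0.
apply: filterS2 le_uv (limsup_on_ev_le bv _ e0) => n le_n le_v Pn.
by have := le_n Pn; have := le_v Pn; lra.
Qed.

Lemma limsup_on_cvg (u : nat -> R) l : bounded_seq u -> u @ \oo --> l -> limsup_on P u = l.
Proof.
move=> bu /cvgrPdist_le ul; apply/eqP; rewrite eq_le; apply/andP; split.
- apply: limsup_on_le => // e /ul; apply: filterS => n + _.
  by rewrite ler_distlC => /andP[].
- apply: limsup_on_ge => // e /ul; apply: filterS => n + _.
  by rewrite ler_distlC => /andP[].
Qed.

End LimsupOn.

Lemma sqr_le_sqrD_small {R : realFieldType} {B e : R} : 0 <= B -> 0 < e ->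
  exists2 eta, 0 < eta &
    forall a d, 0 <= a <= B -> 0 <= d -> a <= d + eta -> a ^+ 2 <= d ^+ 2 + e.
Proof.
move=> B0 e0; have B1 : 0 < 2 * B + 1 by lra.
exists (e / (2 * B + 1)) => [|a d /andP[a0 aB] d0 ad]; first exact: divr_gt0.
have eta_e : e / (2 * B + 1) * (2 * B + 1) = e by rewrite divfK ?gt_eqF.
have eta0 : 0 < e / (2 * B + 1) by exact: divr_gt0.
move: (e / (2 * B + 1)) eta_e eta0 ad => eta eta_e eta0 ad.
have [le_ad | lt_da] := lerP a d.
  have : a ^+ 2 <= d ^+ 2 by rewrite lerXn2r // nnegrE.
  lra.
nra.
Qed.

Section Minimizer.
Context {R : realType} {H : completeNormedModType R}.
Context {K : set H} {g : H -> R} {kappa : R}.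
Hypothesis kappa_gt0 : 0 < kappa.
Hypothesis K_midpoint : forall a b, K a -> K b -> K (2^-1 *: (a + b)).
Hypothesis g_midpoint : forall a b, K a -> K b ->
  g (2^-1 *: (a + b)) <= 2^-1 * g a + 2^-1 * g b - kappa * `|a - b| ^+ 2.

Lemma minimizer_unique m m' : K m -> (forall w, K w -> g m <= g w) ->
  K m' -> g m' <= g m -> m' = m.
Proof.
move=> Km min_m Km' le_m'm.
have := g_midpoint _ _ Km Km'; have := min_m _ (K_midpoint _ _ Km Km') => h1 h2.
have : kappa * `|m - m'| ^+ 2 <= 0 by lra.
rewrite pmulr_rle0 // => le0.
have /eqP : `|m - m'| ^+ 2 = 0 by apply/eqP; rewrite eq_le le0 sqr_ge0.
by rewrite sqrf_eq0 normr_eq0 subr_eq0 => /eqP.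
Qed.

Hypothesis K0 : K !=set0.
Hypothesis K_closed : closed K.
Hypothesis g_ge0 : forall w, K w -> 0 <= g w.
Hypothesis g_lsc : forall w e, K w -> 0 < e -> exists2 d, 0 < d &
  forall v, K v -> `|w - v| < d -> g w <= g v + e.

Let d := inf (g @` K).

Let has_inf_g : has_inf (g @` K).
Proof.
have [w Kw] := K0; split; first by exists (g w), w.
by exists 0 => _ [w' Kw' <-]; exact: g_ge0.
Qed.

Let ex_minimizing : exists2 w : nat -> H, (forall j, K (w j)) &
  forall j, g (w j) < d + j.+1%:R^-1.
Proof.
have /choice[w hw] : forall j : nat, exists w, K w /\ g w < d + j.+1%:R^-1.
  move=> j; have j0 : 0 < (j.+1%:R : R)^-1 by rewrite invr_gt0.
  by have [_ [w Kw <-] ?] := inf_adherent j0 has_inf_g; exists w.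
by exists w => j; case: (hw j).
Qed.

Lemma ex_minimizer : exists2 m, K m & forall w, K w -> g m <= g w.
Proof.
have d_le w : K w -> d <= g w by move=> Kw; apply: ge_inf; [case: has_inf_g | exists w].
have [w Kw gw] := ex_minimizing.
have w_close i j : kappa * `|w i - w j| ^+ 2 <= 2^-1 * i.+1%:R^-1 + 2^-1 * j.+1%:R^-1.
  have := g_midpoint _ _ (Kw i) (Kw j); have := d_le _ (K_midpoint _ _ (Kw i) (Kw j)).
  have := gw i; have := gw j.
  by move: (i.+1%:R^-1 : R) (j.+1%:R^-1 : R) => a b; lra.
(* Midpoint convexity with modulus kappa makes every minimizing sequence Cauchy. *)
have : cvg (w @ \oo).
  apply: cauchy_cvg; apply: cauchy_exP => e e0.
  have ke : 0 < kappa * e ^+ 2 by rewrite mulr_gt0 // exprn_gt0.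
  have [N _ smallN] := near_infty_natSinv_lt (PosNum ke).
  exists (w N); exists N => // n Nn /=; rewrite -ball_normE /=.
  have := w_close N n; have := smallN _ (leqnn N) => /=.
  have : n.+1%:R^-1 <= N.+1%:R^-1 :> R by rewrite lef_pV2 ?posrE // ler_nat ltnS.
  move: (N.+1%:R^-1 : R) (n.+1%:R^-1 : R) => a b ba ake wclose.
  have : kappa * `|w N - w n| ^+ 2 < kappa * e ^+ 2 by lra.
  by rewrite ltr_pM2l // ltr_pXn2r // ?nnegrE // ltW.
move=> /(cvg_ex (w @ \oo))[l wl].
have Kl : K l by apply: closed_cvg wl => //; exact: nearW.
exists l => // v Kv; apply: le_trans (d_le _ Kv).
apply/ler_addgt0Pr => e e0; have e2 : 0 < e / 2 by rewrite divr_gt0.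
have [r r0 lsc_l] := g_lsc _ _ Kl e2.
move/cvgrPdist_lt: wl => /(_ _ r0) close.
have [n [{}close small]] := filter_ex (filterI close (near_infty_natSinv_lt (PosNum e2))).
have := lsc_l _ (Kw n) close; have := gw n; move: small => /=.
by move: (n.+1%:R^-1 : R) => a; lra.
Qed.

End Minimizer.

Section Projection.
Context {R : realType} {H : completeNormedModType R} (I : inner_product H).
Context {C : set H}.
Hypotheses (C0 : C !=set0) (C_closed : closed C) (C_convex : convex_set C).

Lemma ex_proj_closer z : exists2 p, C p & forall y, C y -> `|y - p| <= `|y - z|.
Proof.
have kappa0 : 0 < 4^-1 :> R by rewrite invr_gt0.
have g_mid a b : C a -> C b -> `|z - 2^-1 *: (a + b)| ^+ 2 <=
    2^-1 * `|z - a| ^+ 2 + 2^-1 * `|z - b| ^+ 2 - 4^-1 * `|a - b| ^+ 2.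
  by rewrite (sqr_norm_sub_midpoint I).
have g_lsc w e : C w -> 0 < e -> exists2 d, 0 < d &
    forall v, C v -> `|w - v| < d -> `|z - w| ^+ 2 <= `|z - v| ^+ 2 + e.
  move=> _ e0; have [eta eta0 sqr_le] := sqr_le_sqrD_small (normr_ge0 (z - w)) e0.
  exists eta => // v _ wv; apply: sqr_le => //; first by rewrite normr_ge0 lexx.
  by apply: le_trans (ler_distD v z w) _; rewrite lerD2l distrC ltW.
have [p Cp min_p] := ex_minimizer (g := fun w => `|z - w| ^+ 2) kappa0
  (convex_set_midpoint C_convex) g_mid C0 C_closed (fun w _ => sqr_ge0 _) g_lsc.
exists p => // y Cy; rewrite distrC -(ler_pXn2r (_ : 0 < 2)%N) ?nnegrE //.
(* Compare p with the points (1 - t) p + t y of C and let t tend to 0. *)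
have near_p t : 0 < t <= 1 -> `|p - y| ^+ 2 <= `|y - z| ^+ 2 + t * `|p - y| ^+ 2.
  move=> /andP[t0 t1]; have := min_p _ (convex_set_combination C_convex Cp Cy (ltW t0) t1).
  rewrite [`|z - (_ + _)|]distrC convex_combB (sqr_norm_convex I) opprB subrKA.
  rewrite [`|z - p|]distrC => min_t.
  have : t * (`|p - z| ^+ 2 + (1 - t) * `|p - y| ^+ 2) <= t * `|y - z| ^+ 2 by lra.
  by rewrite ler_pM2l // => ?; have := sqr_ge0 `|p - z|; lra.
apply/ler_addgt0Pr => e e0.
pose t := Num.min 1 (e / (`|p - y| ^+ 2 + 1)).
have D1 : 0 < `|p - y| ^+ 2 + 1 by rewrite ltr_wpDl ?sqr_ge0.
have t0 : 0 < t by rewrite lt_min ltr01 divr_gt0.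
have t1 : t <= 1 by rewrite ge_min lexx.
have : t * (`|p - y| ^+ 2 + 1) <= e by rewrite -ler_pdivlMr // ge_min lexx orbT.
have := near_p t; rewrite t0 t1 /= => /(_ isT).
nra.
Qed.

End Projection.

Definition limsup_sqdist {R : realType} {H : normedModType R}
    (P : nat -> Prop) (x : nat -> H) (z : H) : R :=
  limsup_on P (fun n => `|x n - z| ^+ 2).

Definition is_asymp_center {R : realType} {H : normedModType R}
    (P : nat -> Prop) (x : nat -> H) (c : H) :=
  forall z, limsup_sqdist P x c <= limsup_sqdist P x z.

Section AsymptoticCenter.
Context {R : realType} {H : completeNormedModType R} (I : inner_product H).
Context {P : nat -> Prop} (freqP : frequently P).
Context {x : nat -> H} {M : R} (xM : forall n, `|x n| <= M).

Lemma bounded_sqdist z : bounded_seq (fun n => `|x n - z| ^+ 2).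
Proof.
exists ((M + `|z|) ^+ 2) => n; rewrite ger0_norm ?sqr_ge0 // lerXn2r ?nnegrE //.
- by apply: addr_ge0 => //; exact: le_trans (xM 0).
- by apply: le_trans (ler_normB _ _) _; rewrite lerD2r.
Qed.

Lemma limsup_sqdist_ge0 z : 0 <= limsup_sqdist P x z.
Proof.
apply: (limsup_on_ge freqP (bounded_sqdist z)) => e e0.
by apply: nearW => n _; have := sqr_ge0 `|x n - z|; lra.
Qed.

Lemma limsup_sqdist_midpoint a b :
  limsup_sqdist P x (2^-1 *: (a + b)) <=
  2^-1 * limsup_sqdist P x a + 2^-1 * limsup_sqdist P x b - 4^-1 * `|a - b| ^+ 2.
Proof.
apply: (limsup_on_le freqP (bounded_sqdist _)) => e e0.
apply: filterS2 (limsup_on_ev_le freqP (bounded_sqdist a) _ e0)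
  (limsup_on_ev_le freqP (bounded_sqdist b) _ e0) => n le_a le_b Pn.
by rewrite (sqr_norm_sub_midpoint I); have := le_a Pn; have := le_b Pn; rewrite /limsup_sqdist; lra.
Qed.

Lemma limsup_sqdist_lsc w e : 0 < e -> exists2 d, 0 < d &
  forall v, `|w - v| < d -> limsup_sqdist P x w <= limsup_sqdist P x v + e.
Proof.
move=> e0; have B0 : 0 <= M + `|w| by apply: addr_ge0 => //; exact: le_trans (xM 0).
have [d d0 sqr_le] := sqr_le_sqrD_small B0 e0.
exists d => // v wv; apply: (le_limsup_on freqP (bounded_sqdist _) (bounded_sqdist _)).
apply: nearW => n _; apply: sqr_le => //.
- by rewrite normr_ge0 /=; apply: le_trans (ler_normB _ _) _; rewrite lerD2r.
- by apply: le_trans (ler_distD v _ _) _; rewrite lerD2l distrC ltW.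
Qed.

Lemma ex_asymp_center : exists c, is_asymp_center P x c.
Proof.
have kappa0 : 0 < 4^-1 :> R by rewrite invr_gt0.
have lsc w e : setT w -> 0 < e -> exists2 d, 0 < d & forall v, setT v ->
    `|w - v| < d -> limsup_sqdist P x w <= limsup_sqdist P x v + e.
  by move=> _ /(limsup_sqdist_lsc w)[d d0 close]; exists d => // v _; exact: close.
have [c _ min_c] := ex_minimizer (K := setT) (g := limsup_sqdist P x) kappa0
  (fun _ _ _ _ => Logic.I) (fun a b _ _ => limsup_sqdist_midpoint a b)
  (ex_intro _ 0 Logic.I) closedT (fun z _ => limsup_sqdist_ge0 z) lsc.
by exists c => z; exact: min_c.
Qed.

Lemma asymp_center_unique {c z : H} : is_asymp_center P x c ->
  limsup_sqdist P x z <= limsup_sqdist P x c -> z = c.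
Proof.
have kappa0 : 0 < 4^-1 :> R by rewrite invr_gt0.
move=> center_c; apply: (minimizer_unique (K := setT) kappa0) => //.
by move=> a b _ _; exact: limsup_sqdist_midpoint.
Qed.

Lemma asymp_center_in {C : set H} {c : H} : closed C -> convex_set C ->
  (forall n, C (x n)) -> is_asymp_center P x c -> C c.
Proof.
move=> C_closed C_convex xC center_c.
have [p Cp closer] := ex_proj_closer I (ex_intro _ _ (xC 0%N)) C_closed C_convex c.
rewrite -(asymp_center_unique center_c (_ : limsup_sqdist P x p <= _)) //.
rewrite -[X in _ <= X]addr0; apply: (le_limsup_on freqP (bounded_sqdist _) (bounded_sqdist _)).
by apply: nearW => n _; rewrite addr0 lerXn2r ?nnegrE // closer.
Qed.

End AsymptoticCenter.

Section Nonexpansive.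
Context {R : realType} {H : completeNormedModType R} (I : inner_product H).
Context {C : set H} {N : H -> H} {M : R}.
Hypotheses (C_closed : closed C) (C_convex : convex_set C).
Hypothesis CM : forall y, C y -> `|y| <= M.
Hypothesis NC : forall y, C y -> C (N y).
Hypothesis N_nonexp : forall y z, C y -> C z -> `|N y - N z| <= `|y - z|.

Let dist_le {y z : H} : C y -> C z -> `|y - z| <= 2 * M.
Proof.
move=> Cy Cz; apply: le_trans (ler_normB _ _) _.
by have := CM _ Cy; have := CM _ Cz; lra.
Qed.

Lemma limsup_sqdist_image_le {P : nat -> Prop} {x : nat -> H} c : frequently P ->
  (forall n, C (x n)) -> C c -> (fun n => `|x n - N (x n)|) @ \oo --> 0 ->
  limsup_sqdist P x (N c) <= limsup_sqdist P x c.
Proof.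
move=> freqP xC Cc res0; have xM n := CM _ (xC n).
have M2 : 0 <= 2 * M by have := le_trans (normr_ge0 _) (xM 0%N); lra.
apply/ler_addgt0Pr => e e0; have [eta eta0 sqr_le] := sqr_le_sqrD_small M2 e0.
apply: (le_limsup_on freqP (bounded_sqdist xM _) (bounded_sqdist xM _)).
near=> n => _.
have res_n : `|x n - N (x n)| <= eta.
  by rewrite -[leLHS]normr_id; near: n; exact: cvgr0_norm_le.
apply: sqr_le => //; first by rewrite normr_ge0 dist_le //; exact: NC.
apply: le_trans (ler_distD (N (x n)) _ _) _; rewrite addrC lerD //.
exact: N_nonexp.
Unshelve. all: by end_near. Qed.

Lemma ex_fixed_point : C !=set0 -> exists2 c, C c & N c = c.
Proof.
move=> [u Cu]; pose y n := iter n N u.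
have yC n : C (y n) by elim: n => //= n; exact: NC.
have yM n := CM _ (yC n).
have [c center_c] := ex_asymp_center I frequentlyT yM.
have Cc := asymp_center_in I frequentlyT yM C_closed C_convex yC center_c.
(* N maps the asymptotic center of the orbit to a center of the shifted orbit. *)
exists c => //; apply: (asymp_center_unique I frequentlyT yM center_c).
apply: (limsup_on_le frequentlyT (bounded_sqdist yM _)) => e e0.
have [n0 _ le_n0] := limsup_on_ev_le frequentlyT (bounded_sqdist yM c) _ e0.
exists n0.+1 => // -[//|n] /= lt_n _; apply: le_trans (le_n0 n lt_n Logic.I).
by rewrite lerXn2r ?nnegrE //; exact: N_nonexp.
Qed.

End Nonexpansive.

Section Mann.
Context {R : realType} {H : completeNormedModType R} (I : inner_product H).
Context {C : set H} {N : H -> H} {M : R}.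
Hypotheses (C_closed : closed C) (C_convex : convex_set C).
Hypothesis CM : forall y, C y -> `|y| <= M.
Hypothesis NC : forall y, C y -> C (N y).
Hypothesis N_nonexp : forall y z, C y -> C z -> `|N y - N z| <= `|y - z|.
Context {s : nat -> R} {x : nat -> H}.
Hypotheses (s_ge0 : forall n, 0 <= s n) (s_le1 : forall n, s n <= 1).
Hypothesis x_step : forall n, x n.+1 = (1 - s n) *: x n + s n *: N (x n).
Hypothesis x0C : C (x 0).
Hypothesis s_div : [series s n * (1 - s n)]_n @ \oo --> +oo.

Lemma mann_in n : C (x n).
Proof.
elim: n => // n xnC; rewrite x_step.
exact: convex_set_combination C_convex xnC (NC _ xnC) (s_ge0 n) (s_le1 n).
Qed.

Let xM n : `|x n| <= M := CM _ (mann_in n).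

Lemma mann_fejer q n : C q -> N q = q ->
  `|x n.+1 - q| ^+ 2 <= `|x n - q| ^+ 2 - s n * (1 - s n) * `|x n - N (x n)| ^+ 2.
Proof.
move=> Cq Nq; rewrite x_step convex_combB (sqr_norm_convex I) opprB subrKA.
have : `|N (x n) - q| ^+ 2 <= `|x n - q| ^+ 2.
  by rewrite lerXn2r ?nnegrE // -{1}Nq; exact: N_nonexp (mann_in n) Cq.
by have := s_ge0 n; have := s_le1 n; nra.
Qed.

Lemma mann_residual_nonincreasing :
  nonincreasing_seq (fun n => `|x n - N (x n)|).
Proof.
apply/nonincreasing_seqP => n; have := s_ge0 n; have := s_le1 n => s0 s1.
have step : `|x n - x n.+1| = s n * `|x n - N (x n)|.
  rewrite distrC x_step convex_combB subrr scaler0 add0r normrZ ger0_norm //.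
  by rewrite distrC.
rewrite {1}x_step convex_combB.
apply: le_trans (ler_normD _ _) _; rewrite normrZ ger0_norm ?subr_ge0 //.
rewrite normrZ ger0_norm //.
have := ler_distD (N (x n)) (x n) (N (x n.+1)).
have := N_nonexp _ _ (mann_in n) (mann_in n.+1); rewrite step.
by nra.
Qed.

Lemma mann_residual_cvg0 : (fun n => `|x n - N (x n)|) @ \oo --> 0.
Proof.
have [q Cq Nq] := ex_fixed_point I C_closed C_convex CM NC N_nonexp (ex_intro _ _ x0C).
pose r n := `|x n - N (x n)|; pose D := `|x 0 - q| ^+ 2.
have sum_le n : `|x n - q| ^+ 2 + \sum_(0 <= i < n) s i * (1 - s i) * r i ^+ 2 <= D.
  elim: n => [|n ih]; first by rewrite big_geq // addr0.
  by rewrite big_nat_recr //=; have := mann_fejer q n Cq Nq; rewrite -/(r n); lra.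
(* r is nonincreasing, so r_n^2 times the partial sum is below the Fejer sum. *)
have r_le n : r n ^+ 2 * series (fun i => s i * (1 - s i)) n <= D.
  apply: le_trans (sum_le n); rewrite /series /= mulr_sumr.
  suff : \sum_(0 <= i < n) r n ^+ 2 * (s i * (1 - s i)) <=
         \sum_(0 <= i < n) s i * (1 - s i) * r i ^+ 2 by have := sqr_ge0 `|x n - q|; lra.
  apply: ler_sum_nat => i /andP[_ lt_in]; rewrite mulrC ler_wpM2l //.
    by apply: mulr_ge0; [exact: s_ge0 | rewrite subr_ge0].
  rewrite lerXn2r ?nnegrE ?normr_ge0 //; exact: mann_residual_nonincreasing (ltnW lt_in).
apply/cvgr0Pnorm_lt => eta eta0; have eta2 : 0 < eta ^+ 2 by exact: exprn_gt0.
have /cvgryPge /(_ ((D + 1) / eta ^+ 2)) := s_div.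
apply: filterS => n; rewrite normr_id -/(r n); have := r_le n.
move: (series _ n) => S rS_le S_ge.
have D0 : 0 <= D by exact: sqr_ge0.
have {}S_ge : D + 1 <= eta ^+ 2 * S by rewrite mulrC -ler_pdivrMr.
have S0 : 0 < S by rewrite -(pmulr_rgt0 _ eta2); lra.
have : r n ^+ 2 < eta ^+ 2 by rewrite -(ltr_pM2r S0); lra.
by rewrite ltr_pXn2r ?nnegrE ?normr_ge0 // ltW.
Qed.

Lemma limsup_sqdist_fixed {P : nat -> Prop} {q : H} : frequently P -> C q -> N q = q ->
  limsup_sqdist P x q = limsup_sqdist (fun _ => True) x q.
Proof.
move=> freqP Cq Nq.
have dec : nonincreasing_seq (fun n => `|x n - q| ^+ 2).
  apply/nonincreasing_seqP => n; apply: le_trans (mann_fejer q n Cq Nq) _.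
  by rewrite gerBl mulr_ge0 ?sqr_ge0 // mulr_ge0 ?subr_ge0.
have lb : has_lbound (range (fun n => `|x n - q| ^+ 2)) by exists 0 => _ [n _ <-].
have xq_cvg := nonincreasing_cvgn dec lb.
rewrite /limsup_sqdist (limsup_on_cvg freqP _ _ (bounded_sqdist xM q) xq_cvg).
by rewrite (limsup_on_cvg frequentlyT _ _ (bounded_sqdist xM q) xq_cvg).
Qed.

Lemma asymp_center_mann_fixed {P : nat -> Prop} {c : H} : frequently P ->
  is_asymp_center P x c -> C c /\ N c = c.
Proof.
move=> freqP center_c.
have Cc := asymp_center_in I freqP xM C_closed C_convex mann_in center_c.
split => //; apply: (asymp_center_unique I freqP xM center_c).
exact: (limsup_sqdist_image_le CM NC N_nonexp _ freqP mann_in Cc mann_residual_cvg0).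
Qed.

Lemma asymp_center_mann_subseq {P : nat -> Prop} {c : H} : frequently P ->
  is_asymp_center (fun _ => True) x c -> is_asymp_center P x c.
Proof.
move=> freqP center_c z.
have [Cc Nc] := asymp_center_mann_fixed frequentlyT center_c.
have [cP center_cP] := ex_asymp_center I freqP xM.
have [CcP NcP] := asymp_center_mann_fixed freqP center_cP.
rewrite (limsup_sqdist_fixed freqP Cc Nc); apply: le_trans (center_c cP) _.
by rewrite -(limsup_sqdist_fixed freqP CcP NcP); exact: center_cP.
Qed.

Lemma mann_ip_lt {c : H} y e : is_asymp_center (fun _ => True) x c -> 0 < e ->
  \forall n \near \oo, I (x n - c) y < e.
Proof.
move=> center_c e0; apply: contrapT => not_ev.
pose P n := e <= I (x n - c) y.
have freqP : frequently P.
  by move=> ev_notP; apply: not_ev; apply: filterS ev_notP => n /negP; rewrite -ltNge.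
pose t := e / (`|y| ^+ 2 + 1).
have y1 : 0 < `|y| ^+ 2 + 1 by rewrite ltr_wpDl ?sqr_ge0.
have t0 : 0 < t by exact: divr_gt0.
have ty : t * `|y| ^+ 2 <= e.
  have : t * (`|y| ^+ 2 + 1) = e by rewrite divfK ?gt_eqF.
  by have := sqr_ge0 `|y|; nra.
(* Moving c by t y lowers the limsup along P by t e, so c is not a center along P. *)
have : limsup_sqdist P x (c + t *: y) <= limsup_sqdist P x c - t * e.
  apply: (limsup_on_le freqP (bounded_sqdist xM _)) => e' e'0.
  apply: filterS (limsup_on_ev_le freqP (bounded_sqdist xM c) _ e'0) => n le_n Pn.
  rewrite opprD addrA (sqr_normB I) normrZ exprMn gtr0_norm // ipZr.
  have : t * e <= t * I (x n - c) y by rewrite ler_pM2l.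
  have : t * (t * `|y| ^+ 2) <= t * e by rewrite ler_pM2l.
  by have := le_n Pn; rewrite /limsup_sqdist; lra.
have := asymp_center_mann_subseq freqP center_c (c + t *: y).
have : 0 < t * e by exact: mulr_gt0.
lra.
Qed.

Lemma mann_weak_cvg : exists p, [/\ C p, N p = p & weak_cvg I x p].
Proof.
have [c center_c] := ex_asymp_center I frequentlyT xM.
have [Cc Nc] := asymp_center_mann_fixed frequentlyT center_c.
exists c; split => // y; apply/cvgrPdist_lt => e e0.
near=> n.
have lt_y : I (x n - c) y < e by near: n; exact: mann_ip_lt.
have : I (x n - c) (- y) < e by near: n; exact: mann_ip_lt.
by rewrite (ipNr I) distrC -(ipBl I) ltr_norml; lra.
Unshelve. all: by end_near. Qed.

End Mann.

Definition averaged {R : numDomainType} {V : lmodType R} (w : R) (T : V -> V) (y : V) : V :=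
  (1 - w) *: y + w *: T y.

Section Enriched.
Context {R : realType} {V : normedModType R} (I : inner_product V).

Lemma enriched_averaged_sqr_le (b k : R) (d a : V) : 0 <= b -> k < 1 ->
  `|b *: d + a| ^+ 2 <= (b + 1) ^+ 2 * `|d| ^+ 2 + k * `|d - a| ^+ 2 ->
  `|(1 - (1 - k) / (b + 1)) *: d + (1 - k) / (b + 1) *: a| ^+ 2 <= `|d| ^+ 2.
Proof.
move=> b0 k1; have b1 : 0 < b + 1 by lra.
have w0 : 0 < (1 - k) / (b + 1) by rewrite divr_gt0 // subr_gt0.
have w_comp : (1 - (1 - k) / (b + 1)) * (b + 1) = b + k by field; lra.
rewrite (sqr_norm_convex I) (sqr_normD I) (sqr_normB I) normrZ exprMn ger0_norm // ipZl.
move: ((1 - k) / (b + 1)) w0 w_comp (`|d| ^+ 2) (`|a| ^+ 2) (I d a) => w w0 w_comp D A X hyp.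
have : (b + 1) * (A - D) <= (b + 1) * ((1 - w) * (D - 2 * X + A)) by nra.
rewrite ler_pM2l // => AD.
have : w * (A - D) <= w * ((1 - w) * (D - 2 * X + A)) by rewrite ler_pM2l.
lra.
Qed.

Context {C : set V} {T : V -> V} {b k : R}.
Hypothesis T_spc : enriched_spc C T b k.

Lemma averaged_nonexpansive y z : C y -> C z ->
  `|averaged ((1 - k) / (b + 1)) T y - averaged ((1 - k) / (b + 1)) T z| <= `|y - z|.
Proof.
have [b0 [k1 T_le]] := T_spc; move=> Cy Cz.
rewrite /averaged convex_combBB -(ler_pXn2r (_ : 0 < 2)%N) ?nnegrE //.
exact: enriched_averaged_sqr_le b0 k1 (T_le _ _ Cy Cz).
Qed.

End Enriched.

Lemma averaged_in {R : numDomainType} {V : lmodType R} {C : set V} {T : V -> V} {w : R} :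
  convex_set C -> (forall y, C y -> C (T y)) -> 0 <= w -> w <= 1 ->
  forall y, C y -> C (averaged w T y).
Proof.
by move=> C_convex TC w0 w1 y Cy; exact: convex_set_combination C_convex Cy (TC _ Cy) w0 w1.
Qed.

Lemma averaged_fixed {R : numFieldType} {V : lmodType R} (w : R) (T : V -> V) y :
  w != 0 -> averaged w T y = y -> T y = y.
Proof.
move=> w0 /eqP; rewrite -subr_eq0 convex_combB subrr scaler0 add0r scaler_eq0 (negPf w0).
by rewrite subr_eq0 => /eqP.
Qed.

Lemma km_iter_averaged {R : realType} {V : normedModType R} (T : V -> V) w alpha x0 n :
  km_iter T (w / 2) alpha x0 n.+1 =
  (1 - alpha n / 2) *: km_iter T (w / 2) alpha x0 n +
  alpha n / 2 *: averaged w T (km_iter T (w / 2) alpha x0 n).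
Proof.
rewrite /= /averaged scalerDr !scalerA addrA -scalerDl.
by congr (_ *: _ + _ *: _); ring.
Qed.

Lemma series_half_cvgy {R : realType} {k : R} {alpha : nat -> R} :
  0 <= k -> (forall n, k < alpha n < 1) ->
  [series (alpha n - k) * (1 - alpha n)]_n @ \oo --> +oo ->
  [series alpha n / 2 * (1 - alpha n / 2)]_n @ \oo --> +oo.
Proof.
move=> k0 alpha_in series_div; apply/cvgryPge => A; near=> n.
have : 4 * A <= [series (alpha n - k) * (1 - alpha n)]_n n.
  by near: n; move/cvgryPge : series_div; apply.
rewrite /series /=.
suff : \sum_(0 <= i < n) (alpha i - k) * (1 - alpha i) <=
       4 * \sum_(0 <= i < n) alpha i / 2 * (1 - alpha i / 2) by lra.
by rewrite mulr_sumr; apply: ler_sum_nat => i _; have := alpha_in i; nra.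
Unshelve. all: by end_near. Qed.

Theorem theorem5 (R : realType) (H : completeNormedModType R)
    (I : inner_product H) (C : set H) (T : H -> H) (b k : R) :
  C !=set0 -> closed C -> convex_set C -> bounded_set C ->
  (forall x, C x -> C (T x)) ->
  0 <= k -> enriched_spc C T b k ->
  Fix C T !=set0 /\
  exists lam : R, 0 < lam < 1 /\
    forall (x0 : H) (alpha : nat -> R),
      C x0 ->
      (forall n, k < alpha n < 1) ->
      [series (alpha n - k) * (1 - alpha n)]_n @ \oo --> +oo ->
      exists p, Fix C T p /\ weak_cvg I (km_iter T lam alpha x0) p.
Proof.
move=> C0 C_closed C_convex C_bounded TC k0 T_spc.
have [M _ C_le] := pinfty_ex_gt0 C_bounded.
have CM y : C y -> `|y| <= M by exact: C_le.
have [b0 [k1 _]] := T_spc.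
pose w := (1 - k) / (b + 1).
have w0 : 0 < w by rewrite divr_gt0 //; lra.
have w1 : w <= 1 by rewrite ler_pdivrMr ?mul1r; lra.
have NC := averaged_in C_convex TC (ltW w0) w1.
have N_nonexp := averaged_nonexpansive I T_spc.
have fixN y : averaged w T y = y -> T y = y by apply: averaged_fixed; rewrite gt_eqF.
split.
  have [c Cc Nc] := ex_fixed_point I C_closed C_convex CM NC N_nonexp C0.
  by exists c; split => //; exact: fixN.
(* Not lam := w: w = 1 when b = k = 0. *)
exists (w / 2); split; first by apply/andP; split; lra.
move=> x0 alpha x0C alpha_in series_div.
have s_ge0 n : 0 <= alpha n / 2 by have := alpha_in n; lra.
have s_le1 n : alpha n / 2 <= 1 by have := alpha_in n; lra.
have [p [Cp Np p_weak]] := mann_weak_cvg I C_closed C_convex CM NC N_nonexp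
  s_ge0 s_le1 (km_iter_averaged T w alpha x0) x0C (series_half_cvgy k0 alpha_in series_div).
by exists p; split => //; split => //; exact: fixN.
Qed.
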